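(* Let $p\colon E\to B$ be an arc-hedgehog covering where $E$ and $B$ are Peano spaces. If $B$ is metrizable, then $E$ is metrizable.
   Context: All maps are continuous. A Peano space is a connected, locally path-connected space. For a class $\mathcal{P}$ of spaces, $p\colon E\to B$ is a $\mathcal{P}$-covering if for every $e_0\in E$, $X\in\mathcal{P}$, $x_0\in X$ and map $f\colon X\to B$ with $f(x_0)=p(e_0)$ there is a unique map $g\colon X\to E$ with $p\circ g=f$, $g(x_0)=e_0$. A directed wedge is $(Z,z_0)=\bigvee_{s\in S}(Z_s,z_s)$, a wedge of pointed Peano spaces indexed by a directed set $S$, topologized so that $U\subset Z\setminus\{z_0\}$ is open iff each $U\cap Z_s$ is open, and $U\ni z_0$ is an open neighborhood of $z_0$ iff each $U\cap Z_s$ is open and there is $t\in S$ with $Z_s\subset U$ for all $s>t$. An arc-hedgehog is a directed wedge with each $(Z_s,z_s)\cong([0,1],0)$; an arc-hedgehog covering is a $\mathcal{P}$-covering for $\mathcal{P}$ the class of all arc-hedgehogs. *)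

From HB Require Import structures.
From mathcomp Require Import all_boot all_order all_algebra.
From mathcomp Require Import all_classical all_reals topology normedtype.
From mathcomp Require Import Rstruct Rstruct_topology.
From Stdlib Require Import Rdefinitions.

Set Implicit Arguments.
Unset Strict Implicit.
Unset Printing Implicit Defensive.
Import Order.TTheory GRing.Theory Num.Theory.
Local Open Scope classical_set_scope.
Local Open Scope ring_scope.

Definition path_connected {T : topologicalType} (A : set T) : Prop :=
  forall x y, A x -> A y ->
    exists f : R -> T, {within `[0, 1], continuous f} /\
      f 0 = x /\ f 1 = y /\ f @` `[0, 1] `<=` A.

Definition locally_path_connected (T : topologicalType) : Prop :=
  forall (x : T) (U : set T), nbhs x U ->
    exists V : set T, open V /\ V x /\ V `<=` U /\ path_connected V.

Definition Peano (T : topologicalType) : Prop :=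
  connected [set: T] /\ locally_path_connected T.

Definition metrizable (T : topologicalType) : Prop :=
  exists d : T -> T -> R,
    (forall x y, d x y = 0 <-> x = y) /\
    (forall x y, d x y = d y x) /\
    (forall x y z, d x z <= d x y + d y z) /\
    (forall A : set T, open A <->
       forall x, A x -> exists e : R, 0 < e /\ [set y | d x y < e] `<=` A).

Definition directed_set (S : Type) (le : S -> S -> Prop) : Prop :=
  (exists s : S, True) /\
  (forall s, le s s) /\
  (forall a b c, le a b -> le b c -> le a c) /\
  (forall a b, exists c, le a c /\ le b c).

Definition strictly_above (S : Type) (le : S -> S -> Prop) (t s : S) : Prop :=
  le t s /\ ~ le s t.

(** ** Arc-hedgehogs
   The arc-hedgehog indexed by the directed set (S, le) is the wedge of
   copies Z_s of ([0,1],0), s in S.  Points: [None] is the wedge point z0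
   (= 0 in every Z_s); [Some (s, t)] is the point t in (0,1] of Z_s. *)

Definition hpt (S : Type) := option (S * {t : R | 0 < t <= 1}).

(* U ∩ Z_s, viewed as a subset of [0,1] *)
Definition hslice (S : Type) (U : set (hpt S)) (s : S) : set R :=
  fun t => (t = 0 /\ U None) \/
           (exists h : 0 < t <= 1, U (Some (s, exist _ t h))).

Definition open01 (A : set R) : Prop :=
  forall x, A x -> exists e : R, 0 < e /\
    forall y, 0 <= y <= 1 -> `|y - x| < e -> A y.

Definition hopen (S : Type) (le : S -> S -> Prop) (U : set (hpt S)) : Prop :=
  (forall s, open01 (hslice U s)) /\
  (U None -> exists t : S, forall s, strictly_above le t s ->
                forall u, U (Some (s, u))).

Definition hcont (S : Type) (le : S -> S -> Prop) (T : topologicalType)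
    (f : hpt S -> T) : Prop :=
  forall V : set T, open V -> hopen le (f @^-1` V).

Definition arc_hedgehog_covering (E B : topologicalType) (p : E -> B) : Prop :=
  continuous p /\
  forall (e0 : E) (S : Type) (le : S -> S -> Prop), directed_set le ->
  forall (x0 : hpt S) (f : hpt S -> B), hcont le f -> f x0 = p e0 ->
    exists! g : hpt S -> E, hcont le g /\ p \o g = f /\ g x0 = e0.

From Stdlib Require Import Rdefinitions.
From mathcomp Require Import all_boot all_order all_algebra.
From mathcomp Require Import all_classical all_reals topology normedtype.
From mathcomp Require Import Rstruct Rstruct_topology interval_inference lra.
Import Order.TTheory GRing.Theory Num.Theory.
Local Open Scope classical_set_scope.
Local Open Scope ring_scope.

(* For x, y in E let rho x y be the infimum of the radii r <= 1 for which
   some path from x to y projects into the ball of radius r about p x.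
   Concatenating paths gives the triangle inequality, so rho x y + rho y x is
   a pseudometric; its balls are neighbourhoods because E is locally
   path-connected.  Conversely, suppose paths gam_n start at x and project
   into the ball of radius 1/(n+1) about p x.  The paths p \o gam_n form a
   map from the arc-hedgehog with spines indexed by nat which is continuous at
   the wedge point, since the spines shrink.  Its lift agrees with gam_n on
   every spine by uniqueness of lifts of arcs, and continuity of the lift at
   the wedge point forces gam_n 1 to converge to x; hence every open set
   around x contains a rho-ball.  Uniqueness of lifts also shows that two
   topologically indistinguishable points of a fibre coincide, so the
   pseudometric separates points. *)

(* Continuity on the subspace [[0, 1]] in epsilon form, which unlike
   [{within `[0, 1], continuous g}] is easy to glue along [path_cat]. *)
Definition cont01 {T : topologicalType} (g : R -> T) : Prop :=
  forall t : R, 0 <= t <= 1 -> forall W, nbhs (g t) W ->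
    exists e : R, 0 < e /\ forall s : R, 0 <= s <= 1 -> `|s - t| < e -> W (g s).

Lemma within_continuous_cont01 {T : topologicalType} (g : R -> T) :
  {within `[0, 1], continuous g} -> cont01 g.
Proof.
rewrite continuous_subspace_in => gc t t01 W gtW.
have t01' : `[0, 1]%classic t by rewrite /= in_itv /=.
have : within `[0, 1] (nbhs t) (g @^-1` W).
  by rewrite (nbhs_subspace_in t01'); apply: (gc t); rewrite ?inE.
move=> /nbhs_ballP [e e0 He]; exists e; split => // s s01 st.
by apply: (He s); rewrite /ball /= ?in_itv /= 1?distrC.
Qed.

Lemma cont01_comp {T U : topologicalType} {g : R -> T} {h : T -> U} :
  continuous h -> cont01 g -> cont01 (h \o g).
Proof. by move=> hc gc t t01 W hgtW; exact: gc t t01 _ (hc _ _ hgtW). Qed.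

Lemma cont01_cst {T : topologicalType} (x : T) : cont01 (fun _ : R => x).
Proof.
move=> t _ W xW; exists 1; split; first exact: ltr01.
by move=> *; exact: nbhs_singleton.
Qed.

Definition path_cat {T : Type} (a b : R -> T) (t : R) : T :=
  if t <= 2^-1 then a (2 * t) else b (2 * t - 1).

Lemma cont01_cat {T : topologicalType} (a b : R -> T) :
  cont01 a -> cont01 b -> a 1 = b 0 -> cont01 (path_cat a b).
Proof.
rewrite /path_cat => ac bc ab t /andP[t0 t1] W Wn.
have [e1 [e10 H1]] : exists e1 : R, 0 < e1 /\ forall s : R, 0 <= s -> s <= 2^-1 ->
    `|s - t| < e1 -> W (a (2 * s)).
  case: (leP t 2^-1) Wn => ht Wn; last first.
    exists (t - 2^-1); split=> [|s s0 s2]; first lra.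
    by rewrite distrC ger0_norm; lra.
  have [e [e0 He]] := ac (2 * t) (ltac:(apply/andP; split; lra)) W Wn.
  exists (e / 2); split=> [|s s0 s2 st]; first lra.
  by apply: He; [apply/andP; split; lra | rewrite -mulrBr normrM ger0_norm; lra].
have [e2 [e20 H2]] : exists e2 : R, 0 < e2 /\ forall s : R, 2^-1 < s -> s <= 1 ->
    `|s - t| < e2 -> W (b (2 * s - 1)).
  case: (ltP t 2^-1) => ht.
    exists (2^-1 - t); split=> [|s s0 s2]; first lra.
    by rewrite ger0_norm; lra.
  have Wn' : nbhs (b (2 * t - 1)) W.
    case: (leP t 2^-1) Wn => ht' //.
    by rewrite (_ : 2 * t - 1 = 0) -?ab (_ : 2 * t = 1) //; lra.
  have [e [e0 He]] := bc (2 * t - 1) (ltac:(apply/andP; split; lra)) W Wn'.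
  exists (e / 2); split=> [|s s0 s2 st]; first lra.
  apply: He; first by apply/andP; split; lra.
  have -> : 2 * s - 1 - (2 * t - 1) = 2 * (s - t) by lra.
  rewrite normrM ger0_norm; lra.
exists (Order.min e1 e2); split; first by rewrite lt_min e10 e20.
move=> s /andP[s0 s1]; rewrite lt_min => /andP[se1 se2].
by case: (leP s 2^-1) => hs; [exact: H1 | exact: H2].
Qed.

Lemma open01_slice {T : topologicalType} (g : R -> T) (V : set T) :
  cont01 g -> open V ->
  open01 (fun t => (t = 0 /\ V (g 0)) \/ exists h : 0 < t <= 1, V (g t)).
Proof.
move=> gc oV x Hx.
have [x01 Vgx] : 0 <= x <= 1 /\ V (g x).
  case: Hx => [[-> Vg0]|[/andP[/ltW -> ->] //]].
  by rewrite lexx ler01.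
have [e [e0 He]] := gc x x01 V (open_nbhs_nbhs (conj oV Vgx)).
exists e; split => // y y01 yx.
have [y0|yn0] := eqVneq y 0; first by left; rewrite -y0; split=> //; exact: He.
right; have /andP[y0 y1] := y01.
have y01' : 0 < y <= 1 by rewrite lt_def yn0 y0 y1.
by exists y01'; exact: He.
Qed.

Lemma hcont_comp {S : Type} {le : S -> S -> Prop} {T U : topologicalType}
    {g : hpt S -> T} {h : T -> U} :
  continuous h -> hcont le g -> hcont le (h \o g).
Proof.
move=> hc gc V oV; apply: (gc (h @^-1` V)).
by apply: open_comp => // x _; exact: hc.
Qed.

Lemma lift_unique {E B : topologicalType} {p : E -> B} {S : Type}
    {le : S -> S -> Prop} (x0 : hpt S) (g1 g2 : hpt S -> E) :
  arc_hedgehog_covering p -> directed_set le ->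
  hcont le g1 -> hcont le g2 -> p \o g1 = p \o g2 -> g1 x0 = g2 x0 -> g1 = g2.
Proof.
move=> [pc cov] dirS g1c g2c pg12 g12x0.
have [g [_ gu]] := cov (g1 x0) S le dirS x0 (p \o g1) (hcont_comp pc g1c) erefl.
by rewrite -(gu g1) ?(gu g2).
Qed.

(* The arc-hedgehog with one spine is the arc [0, 1]. *)
Definition le_unit : unit -> unit -> Prop := fun _ _ => True.

Lemma directed_le_unit : directed_set le_unit.
Proof. by split; [exists tt | split; [|split]] => // a b; exists tt. Qed.

Lemma hopen_unit (U : set (hpt unit)) : open01 (hslice U tt) -> hopen le_unit U.
Proof. by move=> U01; split=> [[]|_] //; exists tt => s []. Qed.

Definition arc_of {T : Type} (g : R -> T) : hpt unit -> T :=
  fun z => if z is Some (_, u) then g (sval u) else g 0.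

Lemma hcont_arc_of {T : topologicalType} (g : R -> T) :
  cont01 g -> hcont le_unit (arc_of g).
Proof. by move=> gc V oV; apply: hopen_unit; exact: (open01_slice g V gc oV). Qed.

Definition le_nat : nat -> nat -> Prop := leq.

Lemma directed_le_nat : directed_set le_nat.
Proof.
split; first by exists 0%N.
split; first exact: leqnn.
split; first by move=> a b c; exact: leq_trans.
by move=> a b; exists (maxn a b); rewrite /le_nat leq_maxl leq_maxr.
Qed.

Definition spine (n : nat) (z : hpt unit) : hpt nat :=
  if z is Some (_, u) then Some (n, u) else None.

Lemma fan_endpoints_near {E B : topologicalType} {p : E -> B}
    {x : E} {gam : nat -> R -> E} :
  arc_hedgehog_covering p ->
  (forall n, cont01 (gam n)) -> (forall n, gam n 0 = x) ->
  (forall V, open V -> V (p x) ->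
     \forall n \near \oo, forall t, 0 <= t <= 1 -> V (p (gam n t))) ->
  forall A, open A -> A x -> \forall n \near \oo, A (gam n 1).
Proof.
move=> cov gamc gam0 gam_near A oA Ax; have pc := cov.1.
pose f (z : hpt nat) : B :=
  if z is Some (n, u) then p (gam n (sval u)) else p x.
have fc : hcont le_nat f.
  move=> V oV; split=> [n|Vpx].
    by have := open01_slice _ V (cont01_comp pc (gamc n)) oV; rewrite /= gam0.
  have [N _ HN] := gam_near V oV Vpx.
  exists N => n [Nn _] [t /= t01]; apply: (HN n Nn).
  by case/andP: t01 => /ltW -> ->.
have [g [[gc [pg gx]] _]] := cov.2 x nat le_nat directed_le_nat None f fc erefl.
have g_spine n : g \o spine n = arc_of (gam n).
  apply: (lift_unique None _ _ cov directed_le_unit) => /=.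
  - by move=> V oV; apply: hopen_unit; exact: (gc V oV).1 n.
  - exact: hcont_arc_of.
  - apply: funext => -[[_ u]|] /=; last by rewrite gx gam0.
    exact: (congr1 (fun F => F (Some (n, u))) pg).
  - by rewrite gx gam0.
have gA : (g @^-1` A) None by rewrite /= gx.
have [N HN] := (gc A oA).2 gA.
have in01 : 0 < (1 : R) <= 1 by rewrite ltr01 lexx.
exists N.+1 => // n /= Nn.
have -> : gam n 1 = arc_of (gam n) (Some (tt, exist _ 1 in01)) by [].
by rewrite -g_spine; apply: HN; split; [exact: ltnW | apply/negP; rewrite -ltnNge].
Qed.

Definition two_point {T : Type} (x y : T) (z : hpt unit) : T :=
  if z is Some _ then y else x.

Lemma hcont_two_point {T : topologicalType} (x y : T) :
  (forall V, open V -> V x <-> V y) -> hcont le_unit (two_point x y).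
Proof.
move=> xy V oV; apply: hopen_unit => t Vt.
have [Vx Vy] : V x /\ V y.
  by case: Vt => [[_ Vx]|[? Vy]]; split=> //; apply/(xy V oV).
exists 1; split=> [|s /andP[s0 s1] _]; first exact: ltr01.
have [->|sn0] := eqVneq s 0; [left | right] => //.
have s01 : 0 < s <= 1 by rewrite lt_def sn0 s0 s1.
by exists s01.
Qed.

Lemma fibre_indistinguishable_eq {E B : topologicalType} {p : E -> B} {x y : E} :
  arc_hedgehog_covering p -> p x = p y ->
  (forall V, open V -> V x <-> V y) -> x = y.
Proof.
move=> cov pxy xy; have in01 : 0 < (1 : R) <= 1 by rewrite ltr01 lexx.
suff /(congr1 (fun g => g (Some (tt, exist _ 1 in01)))) : two_point x x = two_point x y by [].
apply: (lift_unique None _ _ cov directed_le_unit) => //.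
- exact: hcont_two_point.
- exact: hcont_two_point.
- by apply: funext => -[|] /=.
Qed.

Section PathGauge.
Context {E B : topologicalType} (p : E -> B) (dB : B -> B -> R).

Definition ball_path (r : R) (x y : E) : Prop :=
  exists gam : R -> E, [/\ cont01 gam, gam 0 = x, gam 1 = y &
    forall t, 0 <= t <= 1 -> dB (p x) (p (gam t)) < r].

(* The cap at radius 1 keeps the set nonempty when no path joins x to y. *)
Definition gauge_set (x y : E) : set R :=
  [set r | r = 1 \/ 0 < r /\ ball_path r x y].

Definition rho (x y : E) : R := inf (gauge_set x y).

Lemma gauge_set_ge0 {x y : E} {r : R} : gauge_set x y r -> 0 <= r.
Proof. by case=> [->|[/ltW]]. Qed.

Lemma has_inf_gauge_set x y : has_inf (gauge_set x y).
Proof. by split; [exists 1; left | exists 0 => r; exact: gauge_set_ge0]. Qed.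

Lemma rho_ge0 x y : 0 <= rho x y.
Proof. by apply: lb_le_inf => [|r]; [exists 1; left | exact: gauge_set_ge0]. Qed.

Lemma rho_le {x y : E} {r : R} : gauge_set x y r -> rho x y <= r.
Proof. exact: (ge_inf (has_inf_gauge_set x y).2). Qed.

Lemma ball_path_le r s x y : r <= s -> ball_path r x y -> ball_path s x y.
Proof.
move=> rs [gam [gc g0 g1 gb]]; exists gam; split=> // t t01.
exact: lt_le_trans (gb t t01) rs.
Qed.

Lemma rho_lt_ball_path {x y : E} {e : R} : rho x y < e -> e <= 1 -> ball_path e x y.
Proof.
move=> re e1; have e_gt0 : 0 < e - rho x y by rewrite subr_gt0.
have [r [r1|[_ rxy]] rl] := inf_adherent e_gt0 (has_inf_gauge_set x y).
- by rewrite /rho in rl; lra.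
- by apply: ball_path_le rxy; rewrite /rho in rl; lra.
Qed.

Lemma min_dist_le_rho x y : Order.min (dB (p x) (p y)) 1 <= rho x y.
Proof.
apply: lb_le_inf; first by exists 1; left.
move=> r [->|[_ [gam [_ _ <- gb]]]]; rewrite ge_min ?lexx ?orbT //.
by apply/orP; left; apply/ltW/gb; rewrite ler01 lexx.
Qed.

Hypothesis dB_eq0 : forall a b, dB a b = 0 <-> a = b.
Hypothesis dB_sym : forall a b, dB a b = dB b a.
Hypothesis dB_tri : forall a b c, dB a c <= dB a b + dB b c.

Lemma dB_refl b : dB b b = 0.
Proof. exact/dB_eq0. Qed.

Lemma dB_ge0 a b : 0 <= dB a b.
Proof. by have := dB_tri a b a; rewrite dB_refl (dB_sym b a); lra. Qed.

Lemma rho_refl x : rho x x = 0.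
Proof.
apply/le_anti; rewrite rho_ge0 andbT; apply/ler_addgt0Pr => e e0.
rewrite add0r; apply: rho_le; right; split=> //.
by exists (fun _ => x); split=> //; [exact: cont01_cst | move=> t _; rewrite dB_refl].
Qed.

Lemma ball_path_cat r1 r2 x y z :
  ball_path r1 x y -> ball_path r2 y z -> ball_path (r1 + r2) x z.
Proof.
move=> [a [ac a0 a1 ab]] [b [bc b0 b1 bb]].
have in01 : 0 <= (1 : R) <= 1 by rewrite ler01 lexx.
have dxy : dB (p x) (p y) < r1 by rewrite -a1; exact: ab.
have r2_gt0 : 0 < r2 by apply: le_lt_trans (bb 0 _); rewrite ?dB_ge0 ?lexx ?ler01.
exists (path_cat a b); split.
- by apply: cont01_cat; rewrite ?a1 ?b0.
- by rewrite /path_cat ifT ?mulr0 //; lra.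
- have [h1 two1] : (1 <= 2^-1 :> R) = false /\ 2 * 1 - 1 = 1 :> R.
    by split; [apply/negbTE; rewrite -ltNge | ]; lra.
  by rewrite /path_cat h1 two1.
move=> t /andP[t0 t1]; rewrite /path_cat; case: ifP => ht.
  have t2 : 0 <= 2 * t <= 1 by apply/andP; split; lra.
  by apply: lt_le_trans (ab _ t2) _; rewrite lerDl ltW.
have ht' : 2^-1 < t by rewrite ltNge ht.
apply: le_lt_trans (dB_tri _ (p y) _) _.
by apply: ltrD dxy (bb _ _); apply/andP; split; lra.
Qed.

Lemma rho_triangle x y z : rho x z <= rho x y + rho y z.
Proof.
apply/ler_addgt0Pr => e e0; have e2_gt0 : 0 < e / 2 by lra.
have [r1 S1 r1l] := inf_adherent e2_gt0 (has_inf_gauge_set x y).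
have [r2 S2 r2l] := inf_adherent e2_gt0 (has_inf_gauge_set y z).
rewrite /rho in r1l r2l *.
suff : inf (gauge_set x z) <= r1 + r2 by lra.
have [r10 r20] := (gauge_set_ge0 S1, gauge_set_ge0 S2).
case: S1 S2 => [r11|[r1_gt0 P1]] [r21|[r2_gt0 P2]].
- by apply: le_trans (rho_le (or_introl erefl)) _; lra.
- by apply: le_trans (rho_le (or_introl erefl)) _; lra.
- by apply: le_trans (rho_le (or_introl erefl)) _; lra.
by apply: rho_le; right; split; [lra | exact: ball_path_cat P1 P2].
Qed.

Hypothesis dB_open : forall A : set B, open A <->
  forall b, A b -> exists e : R, 0 < e /\ [set c | dB b c < e] `<=` A.

Lemma open_dB_ball b r : open [set c | dB b c < r].
Proof.
apply/dB_open => c /= bc; exists (r - dB b c); split=> [|d /= cd]; first lra.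
by have := dB_tri b c d; lra.
Qed.

Lemma rho_le_in_path_connected {V : set E} {x y : E} {r : R} :
  path_connected V -> V x -> V y -> (forall z, V z -> dB (p x) (p z) < r) ->
  rho x y <= r.
Proof.
move=> pcV Vx Vy Vr; have [f [fc [f0 [f1 fV]]]] := pcV x y Vx Vy.
have r_gt0 : 0 < r by apply: le_lt_trans (Vr x Vx); exact: dB_ge0.
apply: rho_le; right; split=> //; exists f; split=> //; first exact: within_continuous_cont01.
by move=> t t01; apply/Vr/fV; exists t => //=; rewrite in_itv.
Qed.

Lemma rho_sym_small_near : locally_path_connected E -> continuous p ->
  forall x e, 0 < e -> \forall z \near x, rho x z + rho z x < e.
Proof.
move=> lpcE pc x e e0.
pose U := p @^-1` [set b | dB (p x) b < e / 4].
have oU : open U by apply: open_comp => [z _|]; [exact: pc | exact: open_dB_ball].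
have Ux : U x by rewrite /U /= dB_refl; lra.
have [V [oV [Vx [VU pcV]]]] := lpcE x U (open_nbhs_nbhs (conj oU Ux)).
apply: filterS (open_nbhs_nbhs (conj oV Vx)) => z Vz.
have xz : rho x z <= e / 4 by apply: (rho_le_in_path_connected pcV Vx Vz) => w /VU.
suff : rho z x <= e / 2 by lra.
apply: (rho_le_in_path_connected pcV Vz Vx) => w /VU Uw.
have Uz : dB (p x) (p z) < e / 4 := VU z Vz.
have Uw' : dB (p x) (p w) < e / 4 := Uw.
by have := dB_tri (p z) (p x) (p w); rewrite (dB_sym (p z) (p x)); lra.
Qed.

Hypothesis cov : arc_hedgehog_covering p.

Lemma open_contains_rho_ball {x : E} {A : set E} : open A -> A x ->
  exists e : R, 0 < e /\ forall y, rho x y < e -> A y.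
Proof.
move=> oA Ax; apply: contrapT => no_e.
have /choice [gam gamP] : forall n : nat, exists gam : R -> E,
    [/\ cont01 gam, gam 0 = x, ~ A (gam 1) &
     forall t, 0 <= t <= 1 -> dB (p x) (p (gam t)) < n.+1%:R^-1].
  move=> n; have en1 : n.+1%:R^-1 <= 1 :> R by rewrite invf_le1 ?ltr0n // ler1n.
  have [y /not_implyP [rxy nAy]] : exists y, ~ (rho x y < n.+1%:R^-1 -> A y).
    by apply/existsNP => allA; apply: no_e; exists n.+1%:R^-1; rewrite invr_gt0 ltr0n.
  have [gam [gc g0 g1 gb]] := rho_lt_ball_path rxy en1.
  by exists gam; split; rewrite ?g1.
have gam_near V : open V -> V (p x) ->
    \forall n \near \oo, forall t, 0 <= t <= 1 -> V (p (gam n t)).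
  move=> oV Vpx; have [e [e0 eV]] := (dB_open V).1 oV (p x) Vpx.
  have := near_infty_natSinv_lt (PosNum e0); apply: filterS => n /= ne t t01.
  by apply: eV; case: (gamP n) => _ _ _ gb; exact: lt_trans (gb t t01) ne.
have gamc n : cont01 (gam n) by case: (gamP n).
have gam0 n : gam n 0 = x by case: (gamP n).
have [n] := filter_ex (fan_endpoints_near cov gamc gam0 gam_near A oA Ax).
by case: (gamP n).
Qed.

Lemma rho_eq0_eq x y : rho x y = 0 -> rho y x = 0 -> x = y.
Proof.
move=> rxy ryx; apply: (fibre_indistinguishable_eq cov).
  apply/dB_eq0/le_anti; rewrite dB_ge0 andbT.
  by have := min_dist_le_rho x y; rewrite rxy ge_min ler10 orbF.
move=> V oV; split=> [Vx|Vy].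
  by have [e [e0 /(_ y)]] := open_contains_rho_ball oV Vx; apply; rewrite rxy.
by have [e [e0 /(_ x)]] := open_contains_rho_ball oV Vy; apply; rewrite ryx.
Qed.

End PathGauge.

Theorem proposition3p10 (E B : topologicalType) (p : E -> B) :
  Peano E -> Peano B -> arc_hedgehog_covering p ->
  metrizable B -> metrizable E.
Proof.
move=> [_ lpcE] _ cov [dB [dB_eq0 [dB_sym [dB_tri dB_open]]]].
have rho_nneg := rho_ge0 p dB.
have rho_tri := rho_triangle p dB dB_eq0 dB_sym dB_tri.
exists (fun x y => rho p dB x y + rho p dB y x); split; [|split; [|split]].
- move=> x y; split=> [rxy|<-]; last by rewrite (rho_refl p dB dB_eq0) addr0.
  have := rho_nneg x y; have := rho_nneg y x => ryx0 rxy0.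
  by apply: (rho_eq0_eq p dB dB_eq0 dB_sym dB_tri dB_open cov); lra.
- by move=> x y; rewrite addrC.
- by move=> x y z; have := rho_tri x y z; have := rho_tri z y x; lra.
move=> A; split=> [oA x Ax | A_ball].
  have [e [e0 eA]] := open_contains_rho_ball p dB dB_open cov oA Ax.
  by exists e; split=> // y /= rxy; apply: eA; have := rho_nneg y x; lra.
rewrite openE => x /A_ball [e [e0 eA]].
have := rho_sym_small_near p dB dB_eq0 dB_sym dB_tri dB_open lpcE cov.1 x e e0.
by apply: filterS => z; exact: eA.
Qed.
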